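(* Let $T$ be a tree with root $r$, edges directed towards $r$, edge set $E$, and let $B,R$ be disjoint sets of leaves of $T$. If $X\subseteq Y\subseteq E$, then $\bar b(Y)\subseteq \bar b(X)$ and $\bar r(Y)\subseteq \bar r(X)$.
   Context: Edges are ordered pairs $st$ pointing from $s$ to $t$, directed towards $r$; a leaf is a vertex with no incoming edges. $A(v,X)$ is the number of edges of $X$ pointing to $v$ minus the number of edges of $X$ pointing away from $v$, and $A(v,X,Y)=A(v,X)-A(v,Y)$. The \emph{blue overflow} $\bar b(X)$ of $X\subseteq E$ is defined by transfinite recursion: $Y_0$ is the set of all edges in $E\setminus X$ whose starting vertex is in $B$; at a successor $\alpha=\beta+1$, if every $st\in E\setminus(X\cup Y_\beta)$ satisfies $A(s,Y_\beta,X)\le 0$, stop and set $\bar b(X)=Y_\beta$; otherwise pick some $st\in E\setminus (X\cup Y_\beta)$ with $A(s,Y_\beta,X)\ge 1$ and let $Y_\alpha=Y_\beta\cup\{st\}$; at limits $Y_\alpha=\bigcup_{\beta<\alpha}Y_\beta$. (The result does not depend on the choices made.) The \emph{red overflow} $\bar r(X)$ is defined identically with $R$ in place of $B$. *)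

From mathcomp Require Import all_boot all_order all_algebra.
From mathcomp Require Import boolp classical_sets functions cardinality.
From mathcomp Require Import finmap.
Local Open Scope fset_scope.
Set Implicit Arguments. Unset Strict Implicit. Unset Printing Implicit Defensive.
Import GRing.Theory Num.Theory.
Local Open Scope classical_set_scope.
Local Open Scope ring_scope.

Section Overflow.
Variable V : choiceType.

(* An edge st is the pair (s,t), pointing from s to t. *)
Notation edge := (V * V)%type.

Inductive reaches (E : set edge) (r : V) : V -> Prop :=
| reaches_root : reaches E r r
| reaches_step v w : E (v, w) -> reaches E r w -> reaches E r v.

Definition rooted_tree (E : set edge) (r : V) : Prop :=
  [/\ forall e, E e -> e.1 <> r,
      forall v, v <> r -> exists! w, E (v, w)
    & forall v, reaches E r v].

(* Every vertex has finitely many incoming edges (needed for A to be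
   an integer). *)
Definition locally_finite (E : set edge) : Prop :=
  forall v, finite_set [set e | E e /\ e.2 = v].

Definition leaf (E : set edge) (v : V) : Prop := forall e, E e -> e.2 <> v.

Definition ncard (X : set edge) : int := (#|` fset_set X|)%:Z.

Definition Acount (v : V) (X : set edge) : int :=
  ncard [set e | X e /\ e.2 = v] - ncard [set e | X e /\ e.1 = v].

Definition Acount2 (v : V) (X Y : set edge) : int := Acount v X - Acount v Y.

Definition ovf_start (E : set edge) (S : set V) (X : set edge) : set edge :=
  [set e | E e /\ ~ X e /\ S e.1].

Definition ovf_addable (E X Y : set edge) (e : edge) : Prop :=
  [/\ E e, ~ X e, ~ Y e & 1 <= Acount2 e.1 Y X].

Definition ovf_stop (E X Y : set edge) : Prop :=
  forall e, E e -> ~ X e -> ~ Y e -> Acount2 e.1 Y X <= 0.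

(* A run of the transfinite recursion, indexed by a well-ordered type
   (I, lt) with greatest element top (i.e. by an ordinal top+1), with
   stages Yf, ending (stopping) at stage top. *)
Definition ovf_run (E : set edge) (S : set V) (X : set edge)
  (I : Type) (lt : I -> I -> Prop) (Yf : I -> set edge) (top : I) : Prop :=
  [/\ well_founded lt,
      (forall i j k, lt i j -> lt j k -> lt i k),
      (forall i j, [\/ lt i j, i = j | lt j i])
    & (forall i, i = top \/ lt i top)] /\
  [/\
      (forall i, (forall j, ~ lt j i) -> Yf i = ovf_start E S X),
      (forall j i, lt j i -> (forall k, ~ (lt j k /\ lt k i)) ->
         exists2 e, ovf_addable E X (Yf j) e & Yf i = Yf j `|` [set e]),
      (forall i, (exists j, lt j i) ->
         (forall j, lt j i -> exists k, lt j k /\ lt k i) ->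
         Yf i = \bigcup_(j in [set j | lt j i]) Yf j)
    & ovf_stop E X (Yf top)].

(* Z is the overflow of X w.r.t. the leaf set S (the blue overflow for
   S = B, the red overflow for S = R): the output of some run. *)
Definition is_overflow (E : set edge) (S : set V) (X Z : set edge) : Prop :=
  exists (I : Type) (lt : I -> I -> Prop) (Yf : I -> set edge) (top : I),
    ovf_run E S X lt Yf top /\ Yf top = Z.

End Overflow.

(* A stage Y' of the run computing the overflow of Y never leaves the overflow
   Z of X.  If an edge st were added to Y' but st were not in Z, then none of
   X, Y, Z contains st, which is the only edge leaving s, so A(s,.) just counts
   incoming edges for them; since in(Y') <= in(Z) and in(X) <= in(Y), this gives
   A(s,Z,X) >= A(s,Y',Y) >= 1, contradicting that the run for X stopped at Z. *)

From mathcomp Require Import all_boot all_order all_algebra.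
From mathcomp Require Import boolp classical_sets functions cardinality.
From mathcomp Require Import finmap.
From mathcomp Require Import zify.
Local Open Scope classical_set_scope.
Local Open Scope ring_scope.

Section Overflow.
Context {V : choiceType}.
Implicit Types (E X Y W : set (V * V)).

Lemma ovf_run_ind {E} {S : set V} {X} {I : Type} {lt : I -> I -> Prop} {Yf top}
    (P : set (V * V) -> Prop) :
  ovf_run E S X lt Yf top -> P (ovf_start E S X) ->
  (forall j e, P (Yf j) -> ovf_addable E X (Yf j) e -> P (Yf j `|` [set e])) ->
  (forall i, (exists j, lt j i) -> (forall j, lt j i -> P (Yf j)) ->
     P (\bigcup_(j in [set j | lt j i]) Yf j)) ->
  forall i, P (Yf i).
Proof.
move=> [[wf _ _ _] [Hmin Hsucc Hlim _]] P0 Psucc Plim i.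
elim: (wf i) => {}i _ IH.
have [i_min|i_not_min] := pselect (forall j, ~ lt j i); first by rewrite Hmin.
have [[j [ji j_pred]]|no_pred] :=
  pselect (exists j, lt j i /\ forall k, ~ (lt j k /\ lt k i)).
  by have [e e_add ->] := Hsucc j i ji j_pred; apply: Psucc (IH j ji) e_add.
have below_i : exists j, lt j i.
  by apply: contrapT => none; apply: i_not_min => j ji; apply: none; exists j.
rewrite Hlim //; first by apply: Plim => // j ji; apply: IH.
move=> j ji; apply: contrapT => no_between; apply: no_pred; exists j.
by split=> // k [jk ki]; apply: no_between; exists k.
Qed.

Lemma ovf_run_sub {E} {S : set V} {X} {I : Type} {lt : I -> I -> Prop} {Yf top} :
  ovf_run E S X lt Yf top -> forall i, Yf i `<=` E.
Proof.
move=> run; apply: (ovf_run_ind (fun W => W `<=` E) run).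
- by move=> e [].
- by move=> j e hj [eE _ _ _] x [/hj|->].
- by move=> i _ IH x [j /IH]; apply.
Qed.

Lemma ovf_start_sub_run {E} {S : set V} {X} {I : Type} {lt : I -> I -> Prop} {Yf top} :
  ovf_run E S X lt Yf top -> forall i, ovf_start E S X `<=` Yf i.
Proof.
move=> run; apply: (ovf_run_ind (fun W => ovf_start E S X `<=` W) run).
- by [].
- by move=> j e hj _ x /hj; left.
- by move=> i [j ji] IH x /(IH j ji) hx; exists j.
Qed.

Lemma le_ncard {W1 W2} : W1 `<=` W2 -> finite_set W2 -> ncard W1 <= ncard W2.
Proof.
move=> W12 W2fin; rewrite /ncard lez_nat; apply: fsubset_leq_card.
by rewrite -fset_set_sub //; apply: sub_finite_set W2fin.
Qed.

Section Tree.
Context {E : set (V * V)} {r : V}.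
Hypotheses (hT : rooted_tree E r) (hlf : locally_finite E).

Lemma finite_in_edges {W} v : W `<=` E -> finite_set [set e | W e /\ e.2 = v].
Proof. by move=> WE; apply: sub_finite_set (hlf v) => e [/WE]. Qed.

Lemma ncard_out_edges0 {W s t} : W `<=` E -> E (s, t) -> ~ W (s, t) ->
  ncard [set e | W e /\ e.1 = s] = 0.
Proof.
case: hT => root_out out_unique _ WE est nWst.
suff -> : [set e | W e /\ e.1 = s] = set0 by rewrite /ncard fset_set0 cardfs0.
apply/seteqP; split=> // -[s' t'] /= [Wst' s's]; subst s'.
have [w [_ w_unique]] := out_unique s (root_out _ est).
have wt := w_unique _ est; have wt' := w_unique _ (WE _ Wst').
by apply: nWst; rewrite -wt wt'.
Qed.

Lemma le_Acount2_out {W1 W2 X Y s t} :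
    W1 `<=` W2 -> W2 `<=` E -> X `<=` Y -> Y `<=` E ->
    E (s, t) -> ~ W2 (s, t) -> ~ Y (s, t) ->
  Acount2 s W1 Y <= Acount2 s W2 X.
Proof.
move=> W12 W2E XY YE est nW2 nY.
have XE : X `<=` E by move=> x /XY /YE.
have nX : ~ X (s, t) by move/XY.
rewrite /Acount2 /Acount (ncard_out_edges0 YE est nY).
rewrite (ncard_out_edges0 W2E est nW2) (ncard_out_edges0 XE est nX).
have inW : ncard [set e | W1 e /\ e.2 = s] <= ncard [set e | W2 e /\ e.2 = s].
  by apply: le_ncard (finite_in_edges s W2E) => e [/W12].
have inX : ncard [set e | X e /\ e.2 = s] <= ncard [set e | Y e /\ e.2 = s].
  by apply: le_ncard (finite_in_edges s YE) => e [/XY].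
have outW1 : 0 <= ncard [set e | W1 e /\ e.1 = s] by [].
move: inW inX outW1; lia.
Qed.

Lemma is_overflow_antitone {S : set V} {X Y Z_X Z_Y} :
    X `<=` Y -> Y `<=` E ->
  is_overflow E S X Z_X -> is_overflow E S Y Z_Y -> Z_Y `<=` Z_X.
Proof.
move=> XY YE [I [lt [Yf [top [runX <-]]]]] [I' [lt' [Yf' [top' [runY <-]]]]].
have [_ [_ _ _ stopX]] := runX.
apply: (ovf_run_ind (fun W => W `<=` Yf top) runY).
- move=> e [eE [nYe Se]]; apply: (ovf_start_sub_run runX top).
  by split=> //; split=> // /XY.
- move=> j [s t] sub_j [est nY _ add_st] x [/sub_j //|->{x}].
  apply: contrapT => nZ.
  have := le_Acount2_out sub_j (ovf_run_sub runX top) XY YE est nZ nY.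
  by have := stopX _ est (fun Xst => nY (XY _ Xst)) nZ; move: add_st => /=; lia.
- by move=> i _ IH x [j /IH]; apply.
Qed.

End Tree.
End Overflow.

(* Antitonicity holds for every start set. *)
Theorem lemma2p5 (V : choiceType) (E : set (V * V)) (r : V) (B R : set V)
  (hT : rooted_tree E r) (hlf : locally_finite E)
  (hBleaf : forall v, B v -> leaf E v) (hRleaf : forall v, R v -> leaf E v)
  (hBR : B `&` R = set0)
  (X Y : set (V * V)) (hXY : X `<=` Y) (hYE : Y `<=` E) :
  (forall bX bY, is_overflow E B X bX -> is_overflow E B Y bY -> bY `<=` bX) /\
  (forall rX rY, is_overflow E R X rX -> is_overflow E R Y rY -> rY `<=` rX).
Proof. by split=> ? ?; exact: (is_overflow_antitone hT hlf hXY hYE). Qed.
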